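(* Let $L_1$ and $L_2$ be distinct lines in the plane meeting at a point ${\bf a}$. Let $2\theta$ be the measure of the smaller angle between the two lines, and let $\phi$ be the angle between the line through ${\bf a}$ parallel to the $x$-axis and the line bisecting the smaller angle between $L_1$ and $L_2$. Then the subset of $\mathbb{R}^3$ generated by $L_1,L_2$ is the HR-cone $(R_\phi\Lambda_\theta R_{-\phi},{\bf a})$, i.e. the set of $(x,y,z)$ with $z^2=({\bf x}-{\bf a})^TR_\phi\Lambda_\theta R_{-\phi}({\bf x}-{\bf a})$, ${\bf x}=(x,y)^T$.
   Context: For distinct lines $L_1,L_2$ in the plane, the subset of $\mathbb{R}^3$ generated by them is the set of all points $(x,y,\pm z)$ such that $2z$ is the length of a line segment with one endpoint on $L_1$, the other on $L_2$, and midpoint $(x,y)$. For real $\phi$ and $0<\theta<\pi/2$: $R_\phi=\begin{bmatrix}\cos\phi&-\sin\phi\\ \sin\phi&\cos\phi\end{bmatrix}$ and $\Lambda_\theta=\begin{bmatrix}\tan^2\theta&0\\0&\cot^2\theta\end{bmatrix}$. For a symmetric positive definite $2\times2$ matrix $A$ with $\det A=1$ and ${\bf a}\in\mathbb{R}^2$, the HR-cone $(A,{\bf a})$ is $\{(x,y,z): z^2=({\bf x}-{\bf a})^TA({\bf x}-{\bf a})\}$. *)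

From mathcomp Require Import all_boot all_order all_algebra.
From mathcomp Require Import all_classical all_reals.
From mathcomp Require Import trigo.
Set Implicit Arguments. Unset Strict Implicit. Unset Printing Implicit Defensive.
Import Order.TTheory GRing.Theory Num.Theory.
Local Open Scope ring_scope.
Local Open Scope classical_set_scope.

Section Defs.
Variable R : realType.

Definition pt (x y : R) : 'cV[R]_2 := \col_(i < 2) (if i == 0 then x else y).

Definition len (v : 'cV[R]_2) : R := Num.sqrt (v 0 0 ^+ 2 + v 1 0 ^+ 2).

Definition dir (t : R) : 'cV[R]_2 := pt (cos t) (sin t).

Definition line (p d : 'cV[R]_2) : set 'cV[R]_2 := [set p + s *: d | s in [set: R]].

(* R^3 is modelled as R^2 x R : (x, y, z) ~ (pt x y, z) *)
(* the subset of R^3 generated by L1, L2: all (x,y,+-z) with 2z the length of a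
   segment with one endpoint on L1, the other on L2, and midpoint (x,y) *)
Definition generated (L1 L2 : set 'cV[R]_2) : set ('cV[R]_2 * R) :=
  [set xz | exists p q, L1 p /\ L2 q /\ xz.1 = 2^-1 *: (p + q) /\
      (xz.2 = len (p - q) / 2 \/ xz.2 = - (len (p - q) / 2))].

Definition rotmx (phi : R) : 'M[R]_2 :=
  \matrix_(i < 2, j < 2)
    (if i == 0 then (if j == 0 then cos phi else - sin phi)
     else (if j == 0 then sin phi else cos phi)).

Definition cot (t : R) : R := cos t / sin t.

Definition Lambda (t : R) : 'M[R]_2 :=
  \matrix_(i < 2, j < 2)
    (if i == j then (if i == 0 then tan t ^+ 2 else cot t ^+ 2) else 0).

Definition HRcone (A : 'M[R]_2) (a : 'cV[R]_2) : set ('cV[R]_2 * R) :=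
  [set xz | xz.2 ^+ 2 = (((xz.1 - a)^T *m A *m (xz.1 - a)) 0 0)].

End Defs.

From mathcomp Require Import all_boot all_order all_algebra.
From mathcomp Require Import all_classical all_reals.
From mathcomp Require Import trigo.
From mathcomp Require Import ring lra.
Import Order.TTheory GRing.Theory Num.Theory.
Local Open Scope ring_scope.
Local Open Scope classical_set_scope.

(* Rotating by [-phi] puts the bisector on the x-axis, where the lines through [a]
   have directions [(cos theta, sin theta)] and [(cos theta, - sin theta)].  For the
   points with parameters [s], [t] on them, put [sigma = (s + t) / 2] and
   [delta = (s - t) / 2]: the midpoint is [a + R_phi (sigma cos theta, delta sin theta)]
   and the half-chord has squared length [(sigma sin theta)^2 + (delta cos theta)^2].
   As [tan theta cos theta = sin theta] and [cot theta sin theta = cos theta], the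
   quadratic form of [Lambda_theta] sends the first vector to the second number, and
   [(s, t) |-> (sigma, delta)] is a bijection. *)

Lemma cV2P (T : Type) (v w : 'cV[T]_2) : v 0 0 = w 0 0 -> v 1 0 = w 1 0 -> v = w.
Proof.
move=> e0 e1; apply/matrixP => i j; rewrite [j]ord1.
by have [-> | ->] : i = 0 \/ i = 1 by case: i => -[|[|//]] ?; [left | right]; apply/val_inj.
Qed.

Lemma sum_ord2 (V : nmodType) (F : 'I_2 -> V) : \sum_(j < 2) F j = F 0 + F 1.
Proof. by rewrite !big_ord_recl big_ord0 addr0; congr (_ + F _); apply/val_inj. Qed.

Lemma qform_conj (T : comNzRingType) n (A M : 'M[T]_n) (v : 'cV[T]_n) :
  v^T *m (M *m A *m M^T) *m v = (M^T *m v)^T *m A *m (M^T *m v).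
Proof. by rewrite trmx_mul trmxK !mulmxA. Qed.

Section RotatedFrame.
Variable R : realType.
Implicit Types (a v w : 'cV[R]_2) (phi theta s t : R).

Lemma rotmx_pt phi (x y : R) :
  rotmx phi *m pt x y = pt (cos phi * x - sin phi * y) (sin phi * x + cos phi * y).
Proof. by apply: cV2P; rewrite !(mxE, sum_ord2) /=; ring. Qed.

Lemma rotmxNK phi v : rotmx (- phi) *m (rotmx phi *m v) = v.
Proof.
have e := cos2Dsin2 phi.
apply: cV2P; rewrite !(mxE, sum_ord2) /= cosN sinN.
- by transitivity (v 0 0 * (cos phi ^+ 2 + sin phi ^+ 2)); [ring | rewrite e mulr1].
- by transitivity (v 1 0 * (cos phi ^+ 2 + sin phi ^+ 2)); [ring | rewrite e mulr1].
Qed.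

Lemma rotmxKN phi v : rotmx phi *m (rotmx (- phi) *m v) = v.
Proof. by have := rotmxNK (- phi) v; rewrite opprK. Qed.

Lemma rotmxN phi : rotmx (- phi) = (rotmx phi)^T.
Proof.
apply/matrixP => i j; rewrite !mxE cosN sinN opprK.
by case: i => -[|[|//]] ?; case: j => -[|[|//]] ?.
Qed.

Lemma len_pt (x y : R) : len (pt x y) = Num.sqrt (x ^+ 2 + y ^+ 2).
Proof. by rewrite /len !mxE. Qed.

Lemma len_rotmx phi v : len (rotmx phi *m v) = len v.
Proof.
have e := cos2Dsin2 phi.
rewrite /len !(mxE, sum_ord2) /=; congr Num.sqrt.
by transitivity ((v 0 0 ^+ 2 + v 1 0 ^+ 2) * (cos phi ^+ 2 + sin phi ^+ 2));
  [ring | rewrite e mulr1].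
Qed.

Lemma scale_dirD phi theta s t :
  s *: dir (phi + theta) + t *: dir (phi - theta) =
  rotmx phi *m pt ((s + t) * cos theta) ((s - t) * sin theta).
Proof. by rewrite rotmx_pt; apply: cV2P; rewrite !mxE /= ?(cosD, sinD, cosN, sinN); ring. Qed.

Lemma qform_Lambda theta w :
  (w^T *m Lambda theta *m w) 0 0 = tan theta ^+ 2 * w 0 0 ^+ 2 + cot theta ^+ 2 * w 1 0 ^+ 2.
Proof. by rewrite !(mxE, sum_ord2) /=; ring. Qed.

Lemma lines_chord a phi theta s t :
  a + s *: dir (phi + theta) - (a + t *: dir (phi - theta)) =
  rotmx phi *m pt ((s - t) * cos theta) ((s + t) * sin theta).
Proof. by rewrite opprD addrACA subrr add0r -scaleNr scale_dirD opprK. Qed.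

Lemma lines_midpoint a phi theta s t :
  2^-1 *: (a + s *: dir (phi + theta) + (a + t *: dir (phi - theta))) - a =
  rotmx phi *m pt ((s + t) / 2 * cos theta) ((s - t) / 2 * sin theta).
Proof.
rewrite addrACA scale_dirD scalerDr -mulr2n -scaler_nat scalerA mulVf ?pnatr_eq0 //.
rewrite scale1r addrAC subrr add0r scalemxAr; congr (_ *m _).
by apply: cV2P; rewrite !mxE /=; field.
Qed.

Lemma lines_half_chord_sqr a phi theta s t :
  (len (a + s *: dir (phi + theta) - (a + t *: dir (phi - theta))) / 2) ^+ 2 =
  ((s + t) / 2 * sin theta) ^+ 2 + ((s - t) / 2 * cos theta) ^+ 2.
Proof.
rewrite lines_chord len_rotmx len_pt expr_div_n sqr_sqrtr ?addr_ge0 ?sqr_ge0 //.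
by field.
Qed.

Lemma generated_linesP a phi theta (x : 'cV[R]_2) z :
  generated (line a (dir (phi + theta))) (line a (dir (phi - theta))) (x, z) <->
  exists sigma delta,
    rotmx (- phi) *m (x - a) = pt (sigma * cos theta) (delta * sin theta) /\
    z ^+ 2 = (sigma * sin theta) ^+ 2 + (delta * cos theta) ^+ 2.
Proof.
split.
- move=> [_ [_ [[s _ <-] [[t _ <-] [/= -> hz]]]]].
  exists ((s + t) / 2), ((s - t) / 2); rewrite lines_midpoint rotmxNK; split => //.
  by rewrite -(lines_half_chord_sqr a phi); case: hz => ->; rewrite ?sqrrN.
- move=> [sigma [delta [hx hz]]].
  have [st_sigma st_delta] : ((sigma + delta) + (sigma - delta)) / 2 = sigma /\
      ((sigma + delta) - (sigma - delta)) / 2 = delta by split; field.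
  have hmid := lines_midpoint a phi theta (sigma + delta) (sigma - delta).
  rewrite st_sigma st_delta -hx rotmxKN in hmid.
  exists (a + (sigma + delta) *: dir (phi + theta)), (a + (sigma - delta) *: dir (phi - theta)).
  split; first by exists (sigma + delta).
  split; first by exists (sigma - delta).
  split; first by move/(congr1 (+%R^~ a)): hmid; rewrite !subrK.
  have := lines_half_chord_sqr a phi theta (sigma + delta) (sigma - delta).
  rewrite st_sigma st_delta -hz => /esym/eqP; rewrite eqf_sqr.
  by case/orP => /eqP ->; [left | right].
Qed.

Lemma HRcone_rotLambdaP a phi theta (x : 'cV[R]_2) z :
  0 < cos theta -> 0 < sin theta ->
  HRcone (rotmx phi *m Lambda theta *m rotmx (- phi)) a (x, z) <->
  exists sigma delta,
    rotmx (- phi) *m (x - a) = pt (sigma * cos theta) (delta * sin theta) /\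
    z ^+ 2 = (sigma * sin theta) ^+ 2 + (delta * cos theta) ^+ 2.
Proof.
move=> c_gt0 s_gt0; have [c_neq0 s_neq0] := (gt_eqF c_gt0, gt_eqF s_gt0).
have tan_cos u : tan theta ^+ 2 * (u * cos theta) ^+ 2 = (u * sin theta) ^+ 2.
  by rewrite /tan; field; rewrite c_neq0.
have cot_sin u : cot theta ^+ 2 * (u * sin theta) ^+ 2 = (u * cos theta) ^+ 2.
  by rewrite /cot; field; rewrite s_neq0.
rewrite /HRcone /= rotmxN qform_conj -rotmxN qform_Lambda.
move: (rotmx (- phi) *m (x - a)) => w; split.
- move=> hz; exists (w 0 0 / cos theta), (w 1 0 / sin theta).
  have [e0 e1] : w 0 0 / cos theta * cos theta = w 0 0 /\ w 1 0 / sin theta * sin theta = w 1 0.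
    by split; rewrite divfK ?c_neq0 ?s_neq0.
  split; first by apply: cV2P; rewrite !mxE /= ?e0 ?e1.
  by rewrite hz -[in LHS]e0 -[in LHS]e1 tan_cos cot_sin.
- by move=> [sigma [delta [-> ->]]]; rewrite !mxE /= tan_cos cot_sin.
Qed.

End RotatedFrame.

Theorem theorem3p3 (R : realType) (a : 'cV[R]_2) (theta phi : R)
  (L1 L2 : set 'cV[R]_2) :
  0 < theta -> theta <= pi / 4 ->
  L1 = line a (dir (phi + theta)) ->
  L2 = line a (dir (phi - theta)) ->
  generated L1 L2 = HRcone (rotmx phi *m Lambda theta *m rotmx (- phi)) a.
Proof.
move=> theta_gt0 theta_le -> ->; have pi_gt0 := pi_gt0 R.
have c_gt0 : 0 < cos theta by apply: cos_gt0_pihalf; apply/andP; split; lra.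
have s_gt0 : 0 < sin theta by apply: sin_gt0_pi; apply/andP; split; lra.
have cone x z := @HRcone_rotLambdaP R a phi theta x z c_gt0 s_gt0.
by apply/seteqP; split => -[x z]; [move/generated_linesP/cone | move/cone/generated_linesP].
Qed.
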